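(* For even integers $k\ge 2$ define $$c_k = \frac{k}{2(k/2+1)(k/2-1)} + (-1)^{k/2}\frac{(k/2)!\,(k/2-2)!}{2(k-1)!}, \qquad d_k = \frac{(-1)^{k/2}(k-1)!}{2^{k+1}}$$ (with $c_k$ considered for $k\ge 4$). Then for every even $k\geq 4$ and every odd positive integer $j\leq k/2-2$: $$\nu_2\!\left(\frac{d_{k-2}}{2c_kd_k}\right)\geq 1,\qquad \nu_2\!\left(\frac{k\,d_{k/2}^2}{2c_kd_k}\right)\geq 0,$$ $$\nu_2\!\left(\left(\binom{k/2}{j}+\binom{k/2-2}{j}\right)\frac{d_{j+1}d_{k-j-1}}{c_kd_k}\right)\geq 0.$$
   Context: For a prime $p$ and nonzero rational $x=a/b$, $\nu_p(x)=\nu_p(a)-\nu_p(b)$ where $\nu_p(m)$ is the exponent of the highest power of $p$ dividing the integer $m$; $\nu_p(0)=\infty$. *)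

From HB Require Import structures.
From mathcomp Require Import all_boot all_order all_algebra.
Set Implicit Arguments. Unset Strict Implicit. Unset Printing Implicit Defensive.
Import Order.TTheory GRing.Theory Num.Theory.
Local Open Scope ring_scope.

Definition padic_val (p : nat) (x : rat) : int :=
  (Posz (logn p `|numq x|%N) - Posz (logn p (`|denq x|%N)))%R.

(* nu_p(x) >= m, with the convention nu_p(0) = +infinity. *)
Definition padic_val_ge (p : nat) (x : rat) (m : int) : Prop :=
  x = 0 \/ m <= padic_val p x.

Definition ck (k : nat) : rat :=
  (k%:R / (2 * (k./2 + 1)%:R * (k./2 - 1)%:R))
  + (-1) ^+ (k./2) * ((k./2)`!%:R * (k./2 - 2)`!%:R) / (2 * (k - 1)`!%:R).

Definition dk (k : nat) : rat :=
  (-1) ^+ (k./2) * (k - 1)`!%:R / 2 ^+ (k + 1).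

(* Write k = 2m, C = 'C(2m, m) and B = 'C(2m, m+1), so that (m+1) B = m C.
   The factorials in c_k and d_k collapse to c_{2m} = M / ((m-1) C) with
   M = B + (-1)^m, and the three quantities become -C / ((2m-1) M),
   (-1)^m (m-1) / M and ('C(n, m-2) + 'C(n, m)) / M, where n = 2m-2-j.
   Everything then rests on one 2-adic fact: M is odd unless m+1 = 2^a, and in
   that case nu_2(M) = 1 while nu_2(C) = a >= 2, m-1 is even, and
   'C(n, m-2) + 'C(n, m) = 'C(n+2, m) (mod 2) is even by Vandermonde's identity,
   since 'C(2^a, i) is even for 0 < i < 2^a.

   For m odd and B odd, (m+1) B = m C gives nu_2(C) = nu_2(m+1). Writing o_p for
   the product of the first p odd numbers,
     'C(4p+2, 2p+1) (2p+1) o_p^2 = 2 (4p+1) o_{2p} 'C(2p, p),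
   so nu_2 'C(4p+2, 2p+1) = nu_2 'C(2p, p) + 1; by induction nu_2(C) = nu_2(m+1)
   forces m+1 = 2^a, and then C / 2^a = 1 (mod 4). Hence B = m C / 2^a = 3
   (mod 4) and M = B - 1 = 2 (mod 4). *)

Set Warnings "-notation-overridden,-ambiguous-paths".
From HB Require Import structures.
From mathcomp Require Import all_boot all_order all_algebra.
From mathcomp Require Import zify ring.
Import Order.TTheory GRing.Theory Num.Theory.

Set Implicit Arguments.
Unset Strict Implicit.
Unset Printing Implicit Defensive.

Fixpoint oddfact n := if n is n'.+1 then n'.*2.+1 * oddfact n' else 1.

Lemma odd_oddfact n : odd (oddfact n).
Proof. by elim: n => //= n IHn; rewrite oddM /= odd_double IHn. Qed.

Lemma oddfact_gt0 n : 0 < oddfact n.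
Proof. by rewrite odd_gt0 ?odd_oddfact. Qed.

Lemma fact_double n : (n.*2)`! = 2 ^ n * n`! * oddfact n.
Proof. by elim: n => // n IHn; rewrite doubleS !factS IHn /= expnS -!mul2n; ring. Qed.

Lemma oddfact_double_mod4 n : oddfact n.*2 %% 4 = if odd n then 3 else 1.
Proof.
elim: n => // n IHn; rewrite doubleS /= mulnA -modnMm IHn.
have -> : n.*2.+1.*2.+1 * n.*2.*2.+1 = 3 + 4 * (4 * n * n + 4 * n) by lia.
by rewrite -modnDm modnMr; case: (odd n).
Qed.

Lemma bin_mid_fact n : 'C(n.*2, n) * n`! = 2 ^ n * oddfact n.
Proof.
have := bin_fact (leq_addl n n); rewrite addnK addnn fact_double => h.
apply/eqP; rewrite -(eqn_pmul2r (fact_gt0 n)); apply/eqP.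
by rewrite -mulnA h; ring.
Qed.

Lemma bin_mid_oddS n :
  'C(n.*2.+1.*2, n.*2.+1) * (n.*2.+1 * oddfact n ^ 2)
  = 2 * (n.*2.*2.+1 * oddfact n.*2) * 'C(n.*2, n).
Proof.
have hS := bin_mid_fact n.*2.+1; have h := bin_mid_fact n.
rewrite factS fact_double /= in hS.
have pos : 0 < 2 ^ n * n`! by rewrite muln_gt0 expn_gt0 fact_gt0.
apply/eqP; rewrite -(eqn_pmul2r pos); apply/eqP.
transitivity ('C(n.*2.+1.*2, n.*2.+1) * (n.*2.+1 * (2 ^ n * n`! * oddfact n))
              * oddfact n); first by ring.
rewrite hS; transitivity (2 * (n.*2.*2.+1 * oddfact n.*2) * 2 ^ n * ('C(n.*2, n) * n`!));
  last by ring.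
by rewrite h -addnn expnS expnD; ring.
Qed.

Lemma odd_sqr_mod4 x : odd x -> x ^ 2 %% 4 = 1.
Proof.
move=> ox; rewrite -(odd_double_half x) ox add1n -muln2 expnS expn1.
by rewrite (_ : _ * _ = (x./2 * x./2 + x./2) * 4 + 1) ?modnMDl //; ring.
Qed.

Lemma logn2_double x : 0 < x -> logn 2 x.*2 = (logn 2 x).+1.
Proof. by move=> x0; rewrite -mul2n lognM // (@logn_prime 2 2). Qed.

Lemma dvd2_logn x : 0 < x -> (2 %| x) = (0 < logn 2 x).
Proof. by move=> x0; rewrite -pfactor_dvdn ?expn1. Qed.

Lemma logn2_mod4_2 x : x %% 4 = 2 -> logn 2 x = 1.
Proof.
move=> x2; have x0 : 0 < x by lia.
have /negbTE : ~~ (2 ^ 2 %| x) by rewrite /dvdn -(@modn_dvdm 4) ?x2 // dvdn_mulr.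
rewrite pfactor_dvdn // => /negbT; rewrite -ltnNge ltnS.
have : 2 ^ 1 %| x by rewrite /dvdn -(@modn_dvdm 4) ?x2.
rewrite pfactor_dvdn //; lia.
Qed.

Lemma bin_mid_gt0 n : 0 < 'C(n.*2, n).
Proof. by rewrite bin_gt0 -addnn leq_addl. Qed.

Lemma bin_mid_even n : 0 < n -> 2 %| 'C(n.*2, n).
Proof.
move=> n0; have := mul_bin_diag n.*2 n.-1; rewrite prednK // => h.
have : n * 'C(n.*2, n) = n * (2 * 'C(n.*2.-1, n.-1)) by rewrite -h -mul2n; ring.
by move/eqP; rewrite eqn_pmul2l // => /eqP ->; apply: dvdn_mulr.
Qed.

Lemma logn2_bin_mid_oddS n :
  logn 2 'C(n.*2.+1.*2, n.*2.+1) = (logn 2 'C(n.*2, n)).+1.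
Proof.
have := congr1 (logn 2) (bin_mid_oddS n).
rewrite mulnC logn_Gauss; last by rewrite coprime2n oddM /= odd_double oddX odd_oddfact.
rewrite -[2 * _ * _]mulnA lognM ?muln_gt0 ?oddfact_gt0 ?bin_mid_gt0 //.
rewrite (@logn_prime 2 2) //= logn_Gauss //.
by rewrite coprime2n oddM /= odd_double odd_oddfact.
Qed.

Lemma bin_mid_logn2_pow2 m :
  logn 2 'C(m.*2, m) = logn 2 m.+1 -> m.+1 = 2 ^ logn 2 m.+1.
Proof.
elim/ltn_ind: m => m IHm.
have [om | em] := boolP (odd m).
  have [n def_m] : exists n, m = n.*2.+1.
    by exists m./2; rewrite -[LHS]odd_double_half om.
  rewrite def_m logn2_bin_mid_oddS -doubleS logn2_double // => -[/IHm hn].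
  by rewrite expnS -hn; lia.
have -> : logn 2 m.+1 = 0 by rewrite logn_coprime // coprime2n /= em.
case: m em {IHm} => // m _ vC; have := bin_mid_even (ltn0Sn m).
by rewrite dvd2_logn ?bin_mid_gt0 // vC.
Qed.

Lemma bin_mid_pow2 a m : 0 < a -> m.+1 = 2 ^ a ->
  exists2 u, 'C(m.*2, m) = 2 ^ a * u & u %% 4 = 1.
Proof.
elim: a m => // [[_ m _ | a IHa m _]].
  by rewrite expn1 => -[->]; exists 1.
move=> hm; have [n def_m] : exists n, m = n.*2.+1.
  have om : odd m by have := congr1 odd hm; rewrite expnS oddM /=; case: (odd m).
  by exists m./2; rewrite -[LHS]odd_double_half om.
have hn : n.+1 = 2 ^ a.+1.
  by move: hm; rewrite def_m -doubleS -mul2n expnS => /eqP; rewrite eqn_pmul2l // => /eqP.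
have [u def_C u1] := IHa n isT hn.
have odd_n : odd n by have := congr1 odd hn; rewrite expnS oddM /=; case: (odd n).
have rec := bin_mid_oddS n; rewrite -def_m def_C in rec.
set X := 'C(m.*2, m) in rec *.
have coprime_odd : coprime (2 ^ a.+2) (m * oddfact n ^ 2).
  by rewrite coprime_pexpl // coprime2n oddM def_m /= odd_double oddX odd_oddfact.
have : 2 ^ a.+2 %| X * (m * oddfact n ^ 2).
  by rewrite rec [2 ^ a.+2]expnS dvdn_mul ?dvdn_mulr.
rewrite Gauss_dvdl // => /dvdnP[u' def_X]; exists u'; first by rewrite def_X mulnC.
have e : u' * (m * oddfact n ^ 2) = n.*2.*2.+1 * oddfact n.*2 * u.
  apply/eqP; rewrite -(eqn_pmul2l (expn_gt0 2 a.+2)); apply/eqP.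
  by rewrite mulnA [2 ^ _ * _]mulnC -def_X rec [2 ^ a.+2]expnS; ring.
have h3 : (m * oddfact n ^ 2) %% 4 = 3.
  by rewrite -modnMm odd_sqr_mod4 ?odd_oddfact // def_m; lia.
have h3' : (n.*2.*2.+1 * oddfact n.*2) %% 4 = 3.
  by rewrite -modnMm oddfact_double_mod4 odd_n; lia.
have e4 := congr1 (modn^~ 4) e.
by rewrite /= -modnMm h3 -[(_ * u) %% 4]modnMm h3' u1 in e4; lia.
Qed.

Lemma bin_pow2_even a i : 0 < i < 2 ^ a -> 2 %| 'C(2 ^ a, i).
Proof.
case/andP=> i0 ia; have a0 : 0 < a by case: a ia => //; lia.
rewrite dvdn2; apply/negP => oC.
have := mul_bin_diag (2 ^ a) i.-1; rewrite prednK // => h.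
have : 2 ^ a %| 'C(2 ^ a, i) * i by rewrite mulnC -h dvdn_mulr.
rewrite Gauss_dvdr; first by move/dvdn_leq => /(_ i0); rewrite leqNgt ia.
by rewrite coprime_pexpl // coprime2n.
Qed.

Lemma bin_pow2_pred_even a m r : m.+1 = 2 ^ a -> m < r <= m.*2 -> 2 %| 'C(r, m).
Proof.
move=> hm /andP[mr rm]; rewrite -(subnKC mr) hm -binomial.Vandermonde.
apply: dvdn_sum => -[[|j] /= jm] _.
  by rewrite [X in _ * X]bin_small ?muln0 // -hm; lia.
by apply: dvdn_mulr; apply: bin_pow2_even; rewrite -hm; lia.
Qed.

Lemma bin_pow2_pred_even_sub2 a m n : 2 <= m -> m.+1 = 2 ^ a -> m < n.+2 <= m.*2 ->
  2 %| 'C(n, m - 2) + 'C(n, m).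
Proof.
case: m => [|[|q]] // _ hm /(bin_pow2_pred_even hm); rewrite subn2 !binS /=.
rewrite (_ : _ + _ + _ = 'C(n, q) + 'C(n, q.+2) + 2 * 'C(n, q.+1)); last by ring.
by rewrite dvdn_addl // dvdn_mulr.
Qed.

Lemma bin_mid_fact_pred m : 0 < m ->
  'C(m.*2, m) * (m * (m.-1)`! ^ 2) = 2 * (m.*2.-1)`!.
Proof.
case: m => // n _; have := bin_fact (leq_addl n.+1 n.+1).
rewrite addnK addnn => h.
apply/eqP; rewrite -(eqn_pmul2l (ltn0Sn n)); apply/eqP.
transitivity ('C(n.+1.*2, n.+1) * (n.+1`! * n.+1`!)); first by rewrite factS /=; ring.
by rewrite h doubleS factS -mul2n; ring.
Qed.

Lemma bin_mid_fact_sub2 m : 2 <= m ->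
  2 * (m.*2.-1)`! = m`! * (m - 2)`! * (m.-1 * 'C(m.*2, m)).
Proof.
case: m => [|[|m]] // _; rewrite -bin_mid_fact_pred // subn2 !factS /=; ring.
Qed.

Lemma bin_fact_swap a b j : j <= a ->
  'C(a, j) * (j`! * (a + b - j)`!) = a`! * b`! * 'C(a + b - j, b).
Proof.
move=> ja; have hj := bin_fact ja.
have := @bin_fact (a + b - j) b (ltac:(lia)); rewrite (_ : a + b - j - b = a - j); last by lia.
move=> hb; apply/eqP; rewrite -(eqn_pmul2r (fact_gt0 (a - j))); apply/eqP.
by rewrite -[in LHS]hb -[in RHS]hj; ring.
Qed.

Lemma bin_sum_fact m j : j.+2 <= m ->
  ('C(m, j) + 'C(m - 2, j)) * (j`! * (m.*2 - j - 2)`!)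
  = m`! * (m - 2)`! * ('C(m.*2 - j - 2, m - 2) + 'C(m.*2 - j - 2, m)).
Proof.
move=> jm; have jm2 : j <= m - 2 by lia.
have := bin_fact_swap (m - 2) (ltnW (ltnW jm)).
rewrite (_ : m + (m - 2) - j = m.*2 - j - 2); last by lia.
have := bin_fact_swap m jm2; rewrite (_ : m - 2 + m - j = m.*2 - j - 2); last by lia.
by move=> h2 h1; rewrite mulnDl h1 h2; ring.
Qed.

Lemma bin_mid_succ m : m.+1 * 'C(m.*2, m.+1) = m * 'C(m.*2, m).
Proof. by rewrite mul_bin_left -addnn addnK. Qed.

Definition ck_num m := if odd m then 'C(m.*2, m.+1) - 1 else 'C(m.*2, m.+1) + 1.

Lemma ck_num_cases m : 2 <= m ->
  odd (ck_num m) \/ exists a,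
    [/\ 2 <= a, m.+1 = 2 ^ a, logn 2 'C(m.*2, m) = a & logn 2 (ck_num m) = 1].
Proof.
move=> m2; have hB := bin_mid_succ m; rewrite /ck_num.
set B := 'C(m.*2, m.+1) in hB *; set C := 'C(m.*2, m) in hB *.
have B0 : 0 < B by rewrite bin_gt0 -addnn; lia.
have [om | em] := boolP (odd m); last first.
  left; rewrite addn1 /= -dvdn2 -(@Gauss_dvdr _ m.+1) ?coprime2n /= ?negbK //.
  by rewrite hB dvdn_mulr // dvdn2.
have [oB | eB] := boolP (odd B); last by left; rewrite oddB // (negbTE eB).
right; exists (logn 2 m.+1).
have vC : logn 2 C = logn 2 m.+1.
  have m0 : 0 < m by lia.
  have := congr1 (logn 2) hB; rewrite !lognM ?bin_mid_gt0 //.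
  by rewrite [logn 2 B]logn_coprime ?[logn 2 m]logn_coprime ?coprime2n // addn0 add0n.
have hm := bin_mid_logn2_pow2 vC.
have a2 : 2 <= logn 2 m.+1.
  have m_ne2 : m != 2 by apply: contraTneq om => ->.
  by rewrite -(@leq_exp2l 2) // -hm; lia.
have [u def_C u1] := bin_mid_pow2 (ltnW a2) hm; rewrite -/C in def_C.
have def_B : B = m * u.
  apply/eqP; rewrite -(eqn_pmul2l (expn_gt0 2 (logn 2 m.+1))) -hm.
  by rewrite hB def_C -hm mulnCA.
have m3 : m %% 4 = 3.
  have : 4 %| m.+1 by rewrite hm -(subnKC a2) expnD dvdn_mulr.
  lia.
split => //; apply: logn2_mod4_2.
have : (m * u) %% 4 = 3 by rewrite -modnMm m3 u1.
by rewrite def_B; set mu := m * u; lia.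
Qed.

Lemma ck_num_gt0 m : 2 <= m -> 0 < ck_num m.
Proof.
by case/ck_num_cases => [/odd_gt0 // | [a [_ _ _]]]; case: (ck_num m).
Qed.

Lemma logn2_ck_num_lt_bin_mid m : 2 <= m ->
  (logn 2 (m.*2.-1 * ck_num m)).+1 <= logn 2 'C(m.*2, m).
Proof.
move=> m2; rewrite logn_Gauss; last by rewrite coprime2n -subn1 oddB ?odd_double; lia.
case: (ck_num_cases m2) => [om | [a [a2 _ -> ->]] //].
by rewrite logn_coprime ?coprime2n // -dvd2_logn ?bin_mid_gt0 ?bin_mid_even //; lia.
Qed.

Lemma logn2_ck_num_le_pred m : 2 <= m -> logn 2 (ck_num m) <= logn 2 m.-1.
Proof.
move=> m2; case: (ck_num_cases m2) => [om | [a [a2 hm _ ->]]].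
  by rewrite logn_coprime ?coprime2n.
have : 4 %| m.+1 by rewrite hm -(subnKC a2) expnD dvdn_mulr.
by rewrite -dvd2_logn; lia.
Qed.

Lemma logn2_ck_num_le_bin_sub2 m n : 2 <= m -> m < n.+2 <= m.*2 ->
  logn 2 (ck_num m) <= logn 2 ('C(n, m - 2) + 'C(n, m)).
Proof.
move=> m2 hn; case: (ck_num_cases m2) => [om | [a [_ hm _ ->]]].
  by rewrite logn_coprime ?coprime2n.
have T0 : 0 < 'C(n, m - 2) + 'C(n, m) by rewrite addn_gt0 bin_gt0; apply/orP; left; lia.
by rewrite -dvd2_logn // (bin_pow2_pred_even_sub2 m2 hm hn).
Qed.

Local Open Scope ring_scope.

Lemma padic_val_ge_frac p (x : rat) (a b e : nat) : prime p -> (0 < a)%N -> (0 < b)%N ->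
  `|x| = a%:R / b%:R -> (e + logn p b <= logn p a)%N -> padic_val_ge p x e%:Z.
Proof.
move=> pp a0 b0 hx he; right.
have x0 : x != 0 by rewrite -normr_eq0 hx mulf_neq0 ?invr_eq0 ?pnatr_eq0 -?lt0n.
have n0 : (0 < `|numq x|)%N by rewrite absz_gt0 numq_eq0.
have d0 : (0 < `|denq x|)%N by rewrite absz_gt0 gt_eqF ?denq_gt0.
have : `|numq x|%:R / `|denq x|%:R = a%:R / b%:R :> rat.
  rewrite !natr_absz !intr_norm -normrV ?unitfE ?intr_eq0 ?denq_neq0 //.
  by rewrite -normrM divq_num_den.
move/eqP; rewrite eqr_div ?pnatr_eq0 -?lt0n // -!natrM eqr_nat => /eqP /(congr1 (logn p)).
by rewrite !lognM // /padic_val; lia.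
Qed.

Lemma dk_neq0 n : dk n != 0.
Proof.
by rewrite /dk !mulf_neq0 ?signr_eq0 ?invr_eq0 ?expf_neq0 ?pnatr_eq0 -?lt0n ?fact_gt0.
Qed.

Lemma dk_addn2 n : (0 < n)%N -> dk n.+2 = - ((n.+1 * n)%:R / 4) * dk n.
Proof.
case: n => // n _; rewrite /dk (_ : n.+3./2 = n.+1./2.+1) // exprS !subn1 /= !factS.
by rewrite !addn1 !exprS !natrM; field; rewrite expf_neq0.
Qed.

Lemma dk_sqr m : (0 < m)%N ->
  m.*2%:R * dk m ^+ 2 = 2 * (-1) ^+ m / 'C(m.*2, m)%:R * dk m.*2.
Proof.
move=> m0; have := congr1 (fun n => n%:R : rat) (bin_mid_fact_pred m0).
move=> /= h; rewrite !natrM in h.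
have C0 : 'C(m.*2, m)%:R != 0 :> rat by rewrite pnatr_eq0 -lt0n bin_mid_gt0.
have P0 : (m.-1)`!%:R != 0 :> rat by rewrite pnatr_eq0 -lt0n fact_gt0.
have eF : (m.*2.-1)`!%:R = 'C(m.*2, m)%:R * (m%:R * (m.-1)`!%:R ^+ 2) / 2 :> rat.
  by rewrite expr2 h mulrC mulKf.
have e2 : m.*2%:R = 2 * m%:R :> rat by rewrite -muln2 natrM mulrC.
rewrite /dk doubleK !subn1 eF e2 -[X in X ^+ 2]mulrA exprMn sqrr_sign mul1r.
have e4 : 2 ^+ m.*2 = 2 ^+ m * 2 ^+ m :> rat by rewrite -addnn exprD.
rewrite !addn1 !exprS e4 -signr_odd.
by case: (odd m); rewrite ?expr1 ?expr0; field; rewrite expf_neq0.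
Qed.

Lemma dk_mul_even a b : ~~ odd a -> ~~ odd b ->
  dk a * dk b = ((a.-1)`! * (b.-1)`!)%:R / (2 * ((a + b).-1)`!%:R) * dk (a + b).
Proof.
move=> ea eb; rewrite /dk !addn1 halfD (negbTE ea) add0n exprD !subn1 natrM.
have F0 : ((a + b).-1)`!%:R != 0 :> rat by rewrite pnatr_eq0 -lt0n fact_gt0.
by rewrite !exprS [2 ^+ (a + b)]exprD; field; rewrite !expf_neq0.
Qed.

Lemma ck_numE m : (2 <= m)%N ->
  (ck_num m)%:R = 'C(m.*2, m.+1)%:R + (-1) ^+ m :> rat.
Proof.
move=> m2; rewrite /ck_num -signr_odd; case: (odd m) => /=.
  by rewrite natrB ?expr1 // bin_gt0 -addnn; lia.
by rewrite natrD expr0.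
Qed.

Lemma ck_double m : (2 <= m)%N ->
  ck m.*2 = (ck_num m)%:R / (m.-1 * 'C(m.*2, m))%:R.
Proof.
move=> m2; rewrite /ck doubleK !subn1 ck_numE //.
have := congr1 (fun n => n%:R : rat) (bin_mid_succ m); rewrite /= !natrM => hB.
have := congr1 (fun n => n%:R : rat) (bin_mid_fact_sub2 m2); rewrite /= !natrM => hF.
have m0 : m.+1%:R != 0 :> rat by rewrite pnatr_eq0.
have m1 : m.-1%:R != 0 :> rat by rewrite pnatr_eq0; lia.
have C0 : 'C(m.*2, m)%:R != 0 :> rat by rewrite pnatr_eq0 -lt0n bin_mid_gt0.
have P0 : (m - 2)`!%:R != 0 :> rat by rewrite pnatr_eq0 -lt0n fact_gt0.
have f0 : m`!%:R != 0 :> rat by rewrite pnatr_eq0 -lt0n fact_gt0.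
have e2 : m.*2%:R = m%:R * 2 :> rat by rewrite -muln2 natrM.
rewrite addn1 e2 -['C(m.*2, m.+1)%:R](mulKf m0) hB.
rewrite -[(m.*2.-1)`!%:R](mulKf (_ : 2 != 0)) // hF.
by field; rewrite C0 m1 P0 f0 addrC natr1 pnatr_eq0.
Qed.

Lemma dk_sub2_div_ck m : (2 <= m)%N ->
  dk (m.*2 - 2) / (2 * ck m.*2 * dk m.*2)
  = - ('C(m.*2, m)%:R / (m.*2.-1 * ck_num m)%:R).
Proof.
move=> m2; have := @dk_addn2 (m.*2 - 2) (ltac:(lia)).
have e1 : (m.*2 - 2).+2 = m.*2 by lia.
have e2 : (m.*2 - 2).+1 = m.*2.-1 by lia.
have e3 : (m.*2 - 2 = m.-1 * 2)%N by lia.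
rewrite e1 e2 => ->; rewrite ck_double // e3.
have d0 := dk_neq0 (m.-1 * 2).
have M0 : (ck_num m)%:R != 0 :> rat by rewrite pnatr_eq0 -lt0n ck_num_gt0.
have m1 : m.-1%:R != 0 :> rat by rewrite pnatr_eq0; lia.
have C0 : 'C(m.*2, m)%:R != 0 :> rat by rewrite pnatr_eq0 -lt0n bin_mid_gt0.
have o0 : m.*2.-1%:R != 0 :> rat by rewrite pnatr_eq0; lia.
by rewrite !natrM; field; apply/and5P.
Qed.

Lemma dk_half_sqr_div_ck m : (2 <= m)%N ->
  m.*2%:R * dk m ^+ 2 / (2 * ck m.*2 * dk m.*2) = (-1) ^+ m * m.-1%:R / (ck_num m)%:R.
Proof.
move=> m2; rewrite dk_sqr ?ck_double //; last by lia.
have d0 := dk_neq0 m.*2.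
have M0 : (ck_num m)%:R != 0 :> rat by rewrite pnatr_eq0 -lt0n ck_num_gt0.
have m1 : m.-1%:R != 0 :> rat by rewrite pnatr_eq0; lia.
have C0 : 'C(m.*2, m)%:R != 0 :> rat by rewrite pnatr_eq0 -lt0n bin_mid_gt0.
by rewrite natrM; field; apply/and4P.
Qed.

Lemma dk_mul_div_ck m j : odd j -> (j.+2 <= m)%N ->
  ('C(m, j) + 'C(m - 2, j))%:R * dk j.+1 * dk (m.*2 - j - 1) / (ck m.*2 * dk m.*2)
  = ('C(m.*2 - j - 2, m - 2) + 'C(m.*2 - j - 2, m))%:R / (ck_num m)%:R.
Proof.
move=> oj jm; have m2 : (2 <= m)%N by lia.
have ev1 : ~~ odd j.+1 by rewrite /= oj.
have ev2 : ~~ odd (m.*2 - j - 1) by rewrite -subnDA addn1 oddB ?odd_double /= ?oj //; lia.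
rewrite -[_ * dk j.+1 * _]mulrA dk_mul_even // (_ : j.+1 + _ = m.*2)%N; last by lia.
rewrite (_ : (m.*2 - j - 1).-1 = m.*2 - j - 2)%N; last by lia.
(* Generalizing [dk m.*2] keeps the rewrites below from unfolding it. *)
rewrite ck_double //; move: (dk m.*2) (dk_neq0 m.*2) => d d0.
rewrite !mulrA -[('C(m, j) + _)%:R * _]natrM [j.+1.-1]/= bin_sum_fact // !natrM.
have := congr1 (fun n => n%:R : rat) (bin_mid_fact_sub2 m2); rewrite /= !natrM => hF.
rewrite -[(m.*2.-1)`!%:R](mulKf (_ : 2 != 0)) // hF.
have M0 : (ck_num m)%:R != 0 :> rat by rewrite pnatr_eq0 -lt0n ck_num_gt0.
have m1 : m.-1%:R != 0 :> rat by rewrite pnatr_eq0; lia.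
have C0 : 'C(m.*2, m)%:R != 0 :> rat by rewrite pnatr_eq0 -lt0n bin_mid_gt0.
have P0 : (m - 2)`!%:R != 0 :> rat by rewrite pnatr_eq0 -lt0n fact_gt0.
have f0 : m`!%:R != 0 :> rat by rewrite pnatr_eq0 -lt0n fact_gt0.
by field; rewrite M0 C0 m1 d0 P0 f0.
Qed.

Theorem lemma3p2 (k : nat) :
  ~~ odd k -> (4 <= k)%N ->
  [/\ padic_val_ge 2 (dk (k - 2) / (2 * ck k * dk k)) 1,
      padic_val_ge 2 (k%:R * dk (k./2) ^+ 2 / (2 * ck k * dk k)) 0 &
      forall j : nat, odd j -> (j <= k./2 - 2)%N ->
        padic_val_ge 2
          (('C(k./2, j) + 'C(k./2 - 2, j))%:R * dk j.+1 * dk (k - j - 1)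
             / (ck k * dk k)) 0].
Proof.
move=> ev k4; have ek : k = k./2.*2 by rewrite -[LHS]odd_double_half (negbTE ev).
have [m -> m2] : exists2 m, k = m.*2 & (2 <= m)%N by exists k./2 => //; lia.
rewrite doubleK; have M0 := ck_num_gt0 m2; split => [||j oj jm].
- rewrite dk_sub2_div_ck //.
  apply: (@padic_val_ge_frac _ _ 'C(m.*2, m) (m.*2.-1 * ck_num m)) => //.
  + exact: bin_mid_gt0.
  + by rewrite muln_gt0 M0 andbT; lia.
  + by rewrite normrN ger0_norm // divr_ge0.
  + exact: logn2_ck_num_lt_bin_mid.
- rewrite dk_half_sqr_div_ck //.
  apply: (@padic_val_ge_frac _ _ m.-1 (ck_num m)) => //.
  + by lia.
  + by rewrite -mulrA normrM normr_sign mul1r ger0_norm // divr_ge0.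
  + exact: logn2_ck_num_le_pred.
- rewrite dk_mul_div_ck //; last by lia.
  set T := ('C(_, _) + _)%N.
  apply: (@padic_val_ge_frac _ _ T (ck_num m)) => //.
  + by rewrite addn_gt0 bin_gt0; apply/orP; left; lia.
  + by rewrite ger0_norm // divr_ge0.
  + by apply: logn2_ck_num_le_bin_sub2 => //; lia.
Qed.
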